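(* Let $n\ge 1$ and consider an operational theory that admits a preparation noncontextual hidden variable model. Consider any protocol for $n$-bit parity-oblivious multiplexing in this theory: for each $x\in\{0,1\}^n$ Alice implements a preparation $P_x$, and for each $y\in\{1,\dots,n\}$ Bob implements a binary-outcome measurement $M_y$ and outputs its outcome $b\in\{0,1\}$. Suppose the protocol is parity-oblivious: for every $s\in\mathrm{Par}$, every measurement $M$ of the theory and every outcome $k$ of $M$, $$\sum_{x:\,x\cdot s=0}p(P_x|k,M)=\sum_{x:\,x\cdot s=1}p(P_x|k,M),$$ where $p(P_x|k,M)$ is the posterior probability of $x$ given outcome $k$ of $M$ under the uniform prior on $x$ (equivalently, $\sum_{x:\,x\cdot s=0}p(k|P_x,M)=\sum_{x:\,x\cdot s=1}p(k|P_x,M)$). Then $$p(b=x_y)=\frac{1}{2^n n}\sum_{y=1}^{n}\sum_{x\in\{0,1\}^n}p(b=x_y|P_x,M_y)\le\frac{n+1}{2n}.$$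
   Context: An operational theory specifies a set of preparation procedures $P$ and measurement procedures $M$ and assigns a probability $p(k|P,M)$ to each outcome $k$ of measurement $M$ given preparation $P$; a procedure that chooses a preparation at random from a list with given probabilities and implements it is also a preparation, whose outcome probabilities are the corresponding convex combination. A hidden variable model of the theory assigns to each preparation $P$ a probability distribution $p(\lambda|P)$ over a space of hidden variables $\lambda$ and to each measurement $M$ conditional outcome distributions $p(k|\lambda,M)$ such that $p(k|P,M)=\int d\lambda\, p(k|\lambda,M)p(\lambda|P)$ for all $P,M,k$; a random mixture of preparations is represented by the corresponding mixture of their distributions $p(\lambda|P)$. The model is preparation noncontextual if whenever two preparations $P,P'$ satisfy $p(k|P,M)=p(k|P',M)$ for all measurements $M$ and outcomes $k$, then $p(\lambda|P)=p(\lambda|P')$. For $x,s\in\{0,1\}^n$, $x\cdot s=\bigoplus_i x_is_i$ (sum modulo 2), called the $s$-parity of $x$; $\mathrm{Par}=\{r\in\{0,1\}^n:\sum_i r_i\ge 2\}$. In $n$-bit parity-oblivious multiplexing, Alice's input $x$ is uniform on $\{0,1\}^n$, Bob's input $y$ is uniform on $\{1,\dots,n\}$ (independently), and Bob must output $b=x_y$, the $y$th bit of $x$. *)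

From HB Require Import structures.
From mathcomp Require Import all_boot all_order all_algebra.
From mathcomp Require Import all_classical all_reals all_analysis.
Set Implicit Arguments. Unset Strict Implicit. Unset Printing Implicit Defensive.
Import Order.TTheory GRing.Theory Num.Theory.
Local Open Scope ring_scope.
Local Open Scope classical_set_scope.

(* An operational theory: preparations, measurements (with finitely many
   outcomes), outcome probabilities p(k|P,M), and closure of the set of
   preparations under random (finite) mixtures: [mix m w Ps] is the procedure
   that picks Ps i with probability w i and implements it. *)
Unset Implicit Arguments.
Record opTheory (R : realType) := OpTheory {
  prep : Type;
  meas : Type;
  outcome : meas -> finType;
  prob : prep -> forall M : meas, outcome M -> R;
  prob_ge0 : forall P M k, 0 <= prob P M k;
  prob_sum1 : forall P M, \sum_(k : outcome M) prob P M k = 1;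
  mix : forall m : nat, ('I_m -> R) -> ('I_m -> prep) -> prep;
  prob_mix : forall m (w : 'I_m -> R) (Ps : 'I_m -> prep) M k,
    (forall i, 0 <= w i) -> \sum_i w i = 1 ->
    prob (mix m w Ps) M k = \sum_i w i * prob (Ps i) M k
}.
Arguments prob {R o} P M k : rename.
Arguments mix {R o} m w Ps : rename.
Arguments outcome {R o} M : rename.
Arguments prep {R} o.
Arguments meas {R} o.
Set Implicit Arguments.

(* A hidden variable model of Th on the hidden-variable space L:
   p(lambda|P) = mu P, p(k|lambda,M) = resp M k lambda. *)
Definition hv_model (R : realType) (Th : opTheory R)
    (d : measure_display) (L : measurableType d)
    (mu : prep Th -> probability L R)
    (resp : forall M : meas Th, outcome M -> L -> R) : Prop :=
  [/\ (forall M k, measurable_fun setT (resp M k)),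
      (forall M k l, 0 <= resp M k l),
      (forall M l, \sum_(k : outcome M) resp M k l = 1),
      (forall P M k,
         ((prob P M k)%:E = \int[mu P]_l (resp M k l)%:E)%E)
    & (forall m (w : 'I_m -> R) (Ps : 'I_m -> prep Th),
         (forall i, 0 <= w i) -> \sum_i w i = 1 ->
         forall A, measurable A ->
           mu (mix m w Ps) A = (\sum_i (w i)%:E * mu (Ps i) A)%E)].

Definition prep_noncontextual (R : realType) (Th : opTheory R)
    (d : measure_display) (L : measurableType d)
    (mu : prep Th -> probability L R) : Prop :=
  forall P P' : prep Th,
    (forall M k, prob P M k = prob P' M k) ->
    forall A, measurable A -> mu P A = mu P' A.

Definition parity (n : nat) (x s : {ffun 'I_n -> bool}) : bool :=
  \big[addb/false]_(i < n) (x i && s i).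

Definition in_Par (n : nat) (s : {ffun 'I_n -> bool}) : bool :=
  (2 <= \sum_(i < n) (s i : nat))%N.

(* p(b = x_y | P_x, M_y), where Bob outputs lab y k for outcome k of M y. *)
Definition succ_prob (R : realType) (Th : opTheory R) (n : nat)
    (P : {ffun 'I_n -> bool} -> prep Th) (M : 'I_n -> meas Th)
    (lab : forall y, outcome (M y) -> bool)
    (x : {ffun 'I_n -> bool}) (y : 'I_n) : R :=
  \sum_(k : outcome (M y) | lab y k == x y) prob (P x) (M y) k.

From HB Require Import structures.
From mathcomp Require Import all_boot all_order all_algebra.
From mathcomp Require Import all_classical all_reals all_analysis.
From mathcomp Require Import measurable_realfun ring lra.
Import Order.TTheory GRing.Theory Num.Theory.
Set Implicit Arguments. Unset Strict Implicit. Unset Printing Implicit Defensive.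
Local Open Scope ring_scope.
Local Open Scope classical_set_scope.

(* In a hidden variable model, Bob's measurement M_y, coarse-grained to one
   bit, outputs b with probability (1 + (-1)^b h_y(l)) / 2 on the hidden state
   l, for a response bias |h_y| <= 1. So the success probability is
   1/2 + D / (2^(n+1) n) with D = sum_y sum_x (-1)^(x_y) E_x[h_y], where E_x is
   the expectation under p(l|P_x). Preparation noncontextuality applied to the
   uniform mixtures of the P_x with x.s = 0 and with x.s = 1 shows that
   sum_x (-1)^(x.s) E_x[f] = 0 for every s in Par and every bounded f.
   Expanding the nonnegative function prod_i (1 - (-1)^(x_i) h_i) over s and
   summing against the E_x, only s = 0 and the unit vectors survive, which
   gives 0 <= 2^n - D. *)

Section bounded_measurable.
Context {R : realType} {d : measure_display} {L : measurableType d}.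
Implicit Types f g : L -> R.

Definition bounded_measurable f :=
  measurable_fun setT f /\ exists C : R, forall l, `|f l| <= C.

Lemma bounded_measurable_cst (c : R) : bounded_measurable (fun=> c).
Proof. by split; [exact: measurable_cst | exists `|c|]. Qed.

Lemma bounded_measurableD f g :
  bounded_measurable f -> bounded_measurable g -> bounded_measurable (f \+ g).
Proof.
move=> [mf [C fC]] [mg [D gD]]; split; first exact: measurable_funD.
by exists (C + D) => l; rewrite (le_trans (ler_normD _ _)) ?lerD.
Qed.

Lemma bounded_measurableM f g :
  bounded_measurable f -> bounded_measurable g -> bounded_measurable (f \* g).
Proof.
move=> [mf [C fC]] [mg [D gD]]; split; first exact: measurable_funM.
by exists (C * D) => l; rewrite normrM ler_pM.
Qed.

Lemma bounded_measurableN f : bounded_measurable f -> bounded_measurable (\- f).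
Proof.
move=> [mf [C fC]]; split; first exact: measurable_funN.
by exists C => l; rewrite normrN.
Qed.

Lemma bounded_measurable_sum (I : Type) (r : seq I) (P : pred I)
    (F : I -> L -> R) :
  (forall i, P i -> bounded_measurable (F i)) ->
  bounded_measurable (fun l => \sum_(i <- r | P i) F i l).
Proof.
move=> bF; elim: r => [|i r ih].
  by under eq_fun do rewrite big_nil; exact: bounded_measurable_cst.
under eq_fun do rewrite big_cons.
by case: (P i) (bF i) => [/(_ isT) bFi|_]; [exact: bounded_measurableD|].
Qed.

Lemma bounded_measurable_prod (I : Type) (r : seq I) (F : I -> L -> R) :
  (forall i, bounded_measurable (F i)) ->
  bounded_measurable (fun l => \prod_(i <- r) F i l).
Proof.
move=> bF; elim: r => [|i r ih].
  by under eq_fun do rewrite big_nil; exact: bounded_measurable_cst.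
by under eq_fun do rewrite big_cons; exact: bounded_measurableM.
Qed.

Lemma bounded_measurable_integrable (mu : probability L R) f :
  bounded_measurable f -> mu.-integrable setT (EFin \o f).
Proof.
move=> [mf [C fC]]; apply: measurable_bounded_integrable => //.
  by rewrite (le_lt_trans (probability_le1 mu measurableT)) ?ltry.
exists C; split; first by rewrite num_real.
by move=> x Cx y _; exact: le_trans (fC y) (ltW Cx).
Qed.

End bounded_measurable.

Section Rintegral_sum.
Context {R : realType} {d : measure_display} {L : measurableType d}.
Variable mu : {measure set L -> \bar R}.

Lemma Rintegral_sum (I : Type) (r : seq I) (P : pred I) (F : I -> L -> R) :
  (forall i, P i -> mu.-integrable setT (EFin \o F i)) ->
  \int[mu]_l (\sum_(i <- r | P i) F i l) = \sum_(i <- r | P i) \int[mu]_l F i l.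
Proof.
move=> iF; elim: r => [|i r ih].
  by under eq_Rintegral do rewrite big_nil; rewrite big_nil /Rintegral integral0.
have iS : mu.-integrable setT (EFin \o (fun l => \sum_(j <- r | P j) F j l)).
  rewrite (_ : _ \o _ = fun l => \sum_(j <- r | P j) (F j l)%:E).
    exact: integrable_sum.
  by apply/funext => l; rewrite /= sumEFin.
under eq_Rintegral do rewrite big_cons; rewrite big_cons.
case: (P i) (iF i) => [/(_ isT) iFi|_ //]; by rewrite RintegralD // ih.
Qed.

End Rintegral_sum.

Lemma Rintegral_cst_probability {R : realType} {d : measure_display}
    {L : measurableType d} (mu : probability L R) (c : R) :
  \int[mu]_l c = c.
Proof. by rewrite Rintegral_cst // [X in fine X]probability_setT mulr1. Qed.

Section sum_measures.
Context {R : realType} {d : measure_display} {L : measurableType d}.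
Variables (I : Type) (m : I -> {measure set L -> \bar R}).

Definition sum_measures (r : seq I) : {measure set L -> \bar R} :=
  foldr (fun i acc => measure_add (m i) acc) mzero r.

Lemma sum_measuresE r A : sum_measures r A = (\sum_(i <- r) m i A)%E.
Proof.
elim: r => [|i r ih]; first by rewrite big_nil.
by rewrite big_cons -ih; exact: measure_addE.
Qed.

Lemma ge0_integral_sum_measures r (f : L -> \bar R) :
  (forall l, 0 <= f l)%E -> measurable_fun setT f ->
  (\int[sum_measures r]_l f l = \sum_(i <- r) \int[m i]_l f l)%E.
Proof.
move=> f0 mf; elim: r => [|i r ih].
  by rewrite big_nil integral_measure_zero.
by rewrite big_cons /= ge0_integral_measure_add // ih.
Qed.

End sum_measures.

Lemma eq_sum_Rintegral {R : realType} {d : measure_display} {L : measurableType d}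
    (T : finType) (m : T -> probability L R) (A1 A2 : pred T) :
  (forall B, measurable B ->
     \sum_(x | A1 x) m x B = \sum_(x | A2 x) m x B)%E ->
  forall f, bounded_measurable f ->
  \sum_(x | A1 x) \int[m x]_l f l = \sum_(x | A2 x) \int[m x]_l f l.
Proof.
(* For nonnegative f both sides are integrals of f against sums of the m x,
   which agree as measures; shifting f by |C| reduces to that case. *)
move=> mA12.
have sumE A f : bounded_measurable f -> (forall l, 0 <= f l) ->
    (\sum_(x | A x) \int[m x]_l f l)%:E
    = (\int[sum_measures m [seq x <- index_enum T | A x]]_l (f l)%:E)%E.
  move=> bf f0.
  rewrite ge0_integral_sum_measures ?big_filter -?sumEFin; last 2 first.
  - by move=> l; rewrite lee_fin.
  - by apply/measurable_EFinP; case: bf.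
  apply: eq_bigr => x _; rewrite fineK //.
  exact: integrable_fin_num (bounded_measurable_integrable _ bf).
have ge0_eq f : bounded_measurable f -> (forall l, 0 <= f l) ->
    \sum_(x | A1 x) \int[m x]_l f l = \sum_(x | A2 x) \int[m x]_l f l.
  move=> bf f0; apply: EFin_inj; rewrite !sumE //.
  apply: eq_measure_integral => B mB _.
  by rewrite !sum_measuresE !big_filter mA12.
move=> f bf; have [_ [C fC]] := bf.
have bC : bounded_measurable (fun _ : L => `|C|) := bounded_measurable_cst _.
have Cf_ge0 l : 0 <= f l + `|C|.
  by have := ler_norm C; have := fC l; rewrite ler_norml => /andP[? _]; lra.
have := ge0_eq _ (bounded_measurableD bf bC) Cf_ge0.
rewrite /= (eq_bigr (fun x => \int[m x]_l f l + \int[m x]_l `|C|)); last first.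
  move=> x _; rewrite RintegralD //; exact: bounded_measurable_integrable.
rewrite [RHS](eq_bigr (fun x => \int[m x]_l f l + \int[m x]_l `|C|)); last first.
  move=> x _; rewrite RintegralD //; exact: bounded_measurable_integrable.
by rewrite !big_split /= (ge0_eq _ bC) // => /addIr.
Qed.

Section bit_vectors.
Variable n : nat.
Implicit Types x s : {ffun 'I_n -> bool}.

Definition zero_bits : {ffun 'I_n -> bool} := [ffun => false].
Definition unit_bits (i : 'I_n) : {ffun 'I_n -> bool} := [ffun j => j == i].

Lemma parity_zero_bitsl s : parity zero_bits s = false.
Proof. by rewrite /parity big1 // => i _; rewrite ffunE. Qed.

Lemma parity_zero_bitsr x : parity x zero_bits = false.
Proof. by rewrite /parity big1 // => i _; rewrite ffunE andbF. Qed.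

Lemma parity_unit_bits x i : parity x (unit_bits i) = x i.
Proof.
rewrite /parity (bigD1 i) //= ffunE eqxx andbT big1 ?addbF // => j ji.
by rewrite ffunE (negbTE ji) andbF.
Qed.

Lemma unit_bits_inj : injective unit_bits.
Proof. by move=> i j /ffunP /(_ i); rewrite !ffunE eqxx => /esym /eqP. Qed.

Lemma sum_notin_Par (V : nmodType) (F : {ffun 'I_n -> bool} -> V) :
  \sum_(s | ~~ in_Par s) F s = F zero_bits + \sum_(i < n) F (unit_bits i).
Proof.
rewrite (bigD1 zero_bits) /=; last first.
  by rewrite /in_Par big1 // => i _; rewrite ffunE.
congr (_ + _); rewrite -(big_imset _ (in2W unit_bits_inj)) /=.
apply: eq_bigl => s; apply/andP/imsetP => [[notPar s_neq0]|[i _ ->]].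
  have [i si] : exists i, s i.
    apply/existsP; apply: contraR s_neq0 => /existsPn s0.
    by apply/eqP/ffunP => j; rewrite ffunE; apply/negbTE.
  exists i => //; apply/ffunP => j; rewrite ffunE.
  case: eqVneq => [-> //|ji]; apply: contraNF notPar => sj.
  by rewrite /in_Par (bigD1 i) //= (bigD1 j) //= si sj.
split; last by apply/eqP => /ffunP /(_ i); rewrite !ffunE eqxx.
rewrite /in_Par (bigD1 i) //= ffunE eqxx big1 // => j ji.
by rewrite ffunE (negbTE ji).
Qed.

Lemma prod_sign_parity (S : pzRingType) x s :
  \prod_i ((-1) ^+ (x i && s i) : S) = (-1) ^+ parity x s.
Proof.
apply/esym/(big_morph (fun b : bool => (-1) ^+ b : S)) => // a b.
by rewrite signr_addb.
Qed.

Lemma prod_one_sub_sign (S : comPzRingType) x (h : 'I_n -> S) :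
  \prod_i (1 - (-1) ^+ x i * h i) =
  \sum_s (-1) ^+ parity x s * \prod_i (if s i then - h i else 1).
Proof.
transitivity (\prod_i \sum_(b : bool) (if b then - ((-1) ^+ x i * h i) else 1)).
  by apply: eq_bigr => i _; rewrite big_bool /= addrC.
rewrite bigA_distr_bigA; apply: eq_bigr => s _.
rewrite -prod_sign_parity -big_split; apply: eq_bigr => i _ /=.
by case: (s i); case: (x i); rewrite /= ?expr0 ?expr1 ?mulN1r ?mul1r ?opprK.
Qed.

End bit_vectors.

Definition parity_oblivious {R : realType} {d : measure_display}
    {L : measurableType d} (n : nat)
    (mu : {ffun 'I_n -> bool} -> probability L R) : Prop :=
  forall s, in_Par s -> forall B, measurable B ->
  (\sum_(x | ~~ parity x s) mu x B = \sum_(x | parity x s) mu x B)%E.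

Section parity_oblivious_bias.
Context {R : realType} {d : measure_display} {L : measurableType d}.
Variables (n : nat) (mu : {ffun 'I_n -> bool} -> probability L R).
Hypothesis mu_po : parity_oblivious mu.
Variable h : 'I_n -> L -> R.
Hypotheses (mh : forall i, measurable_fun setT (h i))
  (h_le1 : forall i l, `|h i l| <= 1).

Let H (s : {ffun 'I_n -> bool}) l := \prod_i (if s i then - h i l else 1).

Let H_bounded_measurable s : bounded_measurable (H s).
Proof.
apply: bounded_measurable_prod => i; case: (s i).
  by apply: bounded_measurableN; split; last exists 1.
exact: bounded_measurable_cst.
Qed.

Let Rintegral_prod x :
  \int[mu x]_l \prod_i (1 - (-1) ^+ x i * h i l)
  = \sum_s (-1) ^+ parity x s * \int[mu x]_l H s l.
Proof.
under eq_Rintegral do rewrite prod_one_sub_sign.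
rewrite Rintegral_sum => [|s _].
  apply: eq_bigr => s _; rewrite RintegralZl //.
  exact: bounded_measurable_integrable (H_bounded_measurable s).
apply/bounded_measurable_integrable/bounded_measurableM.
  exact: bounded_measurable_cst.
exact: H_bounded_measurable.
Qed.

Let parity_sum_eq0 s : in_Par s ->
  \sum_x (-1) ^+ parity x s * \int[mu x]_l H s l = 0.
Proof.
move=> sPar; rewrite (bigID (fun x => parity x s)) /=.
under eq_bigr => x -> do rewrite expr1 mulN1r.
under [X in _ + X]eq_bigr => x /negbTE -> do rewrite expr0 mul1r.
by rewrite sumrN (eq_sum_Rintegral (mu_po sPar)) ?addNr.
Qed.

Lemma parity_oblivious_bias_le :
  \sum_(i < n) \sum_(x : {ffun 'I_n -> bool}) (-1) ^+ x i * \int[mu x]_l h i l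
  <= 2 ^+ n.
Proof.
have : 0 <= \sum_(x : {ffun 'I_n -> bool})
              \int[mu x]_l \prod_i (1 - (-1) ^+ x i * h i l).
  apply: sumr_ge0 => x _; apply: Rintegral_ge0 => l _; apply: prodr_ge0 => i _.
  by rewrite subr_ge0 (le_trans (ler_norm _)) // normrM normr_sign mul1r.
rewrite (eq_bigr _ (fun x _ => Rintegral_prod x)) exchange_big /=.
rewrite (bigID (@in_Par n)) /= big1 ?add0r; last exact: parity_sum_eq0.
rewrite sum_notin_Par.
have -> : H (zero_bits n) = fun=> 1.
  by apply/funext => l; rewrite /H big1 // => i _; rewrite ffunE.
have H_unit x i : \int[mu x]_l H (unit_bits i) l = - \int[mu x]_l h i l.
  rewrite -mulN1r -RintegralZl //.
    apply: eq_Rintegral => l _; rewrite mulN1r /H (bigD1 i) //= ffunE eqxx.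
    by rewrite big1 ?mulr1 // => j ji; rewrite ffunE (negbTE ji).
  by apply: bounded_measurable_integrable; split; last exists 1.
under eq_bigr do rewrite parity_zero_bitsr mul1r Rintegral_cst_probability.
rewrite sumr_const card_ffun card_bool card_ord natrX.
under [X in _ + X]eq_bigr do under eq_bigr do
  rewrite parity_unit_bits H_unit mulrN.
by rewrite (eq_bigr _ (fun i _ => sumrN _ _ _)) sumrN subr_ge0.
Qed.

End parity_oblivious_bias.

Section preparation_noncontextuality.
Variables (R : realType) (Th : opTheory R).
Variables (d : measure_display) (L : measurableType d).
Variable mu : prep Th -> probability L R.
Unset Implicit Arguments.
Variable resp : forall M : meas Th, outcome M -> L -> R.
Set Implicit Arguments.
Hypothesis Hmodel : hv_model mu resp.

Lemma prob_Rintegral P N k : prob P N k = \int[mu P]_l resp N k l.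
Proof. by case: Hmodel => _ _ _ hint _; rewrite /Rintegral -hint. Qed.

Lemma resp_bounded_measurable N k : bounded_measurable (resp N k).
Proof.
case: Hmodel => mresp resp0 resp1 _ _; split=> //; exists 1 => l.
by rewrite ger0_norm // -(resp1 N l) (bigD1 k) //= lerDl sumr_ge0.
Qed.

Section uniform_mix.
Variables (T : finType) (P : T -> prep Th) (A : pred T).
Hypothesis A_gt0 : (0 < #|A|)%N.

Definition uniform_mix : prep Th :=
  mix #|A| (fun=> #|A|%:R^-1) (fun i => P (enum_val i)).

Let uniform_weight_ge0 (i : 'I_#|A|) : 0 <= #|A|%:R^-1 :> R.
Proof. by rewrite invr_ge0. Qed.

Let uniform_weight_sum1 : \sum_(i < #|A|) #|A|%:R^-1 = 1 :> R.
Proof.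
by rewrite sumr_const card_ord -[_ *+ _]mulr_natl mulfV // pnatr_eq0 -lt0n.
Qed.

Lemma prob_uniform_mix N k :
  prob uniform_mix N k = #|A|%:R^-1 * \sum_(x in A) prob (P x) N k.
Proof.
by rewrite prob_mix // -mulr_sumr (big_enum_val (A := A)).
Qed.

Lemma measure_uniform_mix B : measurable B ->
  mu uniform_mix B = ((#|A|%:R^-1)%:E * \sum_(x in A) mu (P x) B)%E.
Proof.
case: Hmodel => _ _ _ _ hmix mB.
by rewrite hmix // (big_enum_val (A := A)) ge0_sume_distrr.
Qed.

End uniform_mix.

Section coarse_graining.
Variables (N : meas Th) (lab : outcome N -> bool).

Definition coarse_resp (b : bool) (l : L) : R := \sum_(k | lab k == b) resp N k l.

Definition coarse_bias (l : L) : R := coarse_resp false l - coarse_resp true l.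

Lemma coarse_resp_bounded_measurable b : bounded_measurable (coarse_resp b).
Proof.
by apply: bounded_measurable_sum => k _; exact: resp_bounded_measurable.
Qed.

Lemma coarse_respTF l : coarse_resp true l + coarse_resp false l = 1.
Proof.
case: Hmodel => _ _ resp1 _ _.
rewrite -(resp1 N l) (bigID (fun k => lab k == true)).
by congr (_ + _); apply: eq_bigl => k; case: (lab k).
Qed.

Lemma coarse_respE b l :
  coarse_resp b l = 2^-1 * (1 + (-1) ^+ b * coarse_bias l).
Proof.
have := coarse_respTF l; rewrite /coarse_bias.
by case: b; rewrite ?expr0 ?expr1 => ?; lra.
Qed.

Lemma coarse_bias_bounded_measurable : bounded_measurable coarse_bias.
Proof.
by apply: bounded_measurableD; last apply: bounded_measurableN;
  exact: coarse_resp_bounded_measurable.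
Qed.

Lemma coarse_bias_le1 l : `|coarse_bias l| <= 1.
Proof.
case: Hmodel => _ resp0 _ _ _; have := coarse_respTF l.
have F0 : 0 <= coarse_resp false l by apply: sumr_ge0 => k _; exact: resp0.
have T0 : 0 <= coarse_resp true l by apply: sumr_ge0 => k _; exact: resp0.
by rewrite /coarse_bias ler_norml => ?; apply/andP; split; lra.
Qed.

Lemma sum_prob_coarse P b :
  \sum_(k | lab k == b) prob P N k = \int[mu P]_l coarse_resp b l.
Proof.
rewrite Rintegral_sum => [|k _]; last first.
  exact/bounded_measurable_integrable/resp_bounded_measurable.
by apply: eq_bigr => k _; rewrite prob_Rintegral.
Qed.

Lemma sum_prob_coarseE P b :
  \sum_(k | lab k == b) prob P N k
  = 2^-1 * (1 + (-1) ^+ b * \int[mu P]_l coarse_bias l).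
Proof.
have bm_bias c : bounded_measurable (fun l => c * coarse_bias l).
  apply: bounded_measurableM; first exact: bounded_measurable_cst.
  exact: coarse_bias_bounded_measurable.
have one_bm : bounded_measurable (fun _ : L => 1 : R) := bounded_measurable_cst 1.
have integrable := bounded_measurable_integrable (mu P).
rewrite sum_prob_coarse; under eq_Rintegral do rewrite coarse_respE.
rewrite RintegralZl ?(RintegralD measurableT (integrable _ one_bm)) //.
- rewrite Rintegral_cst_probability RintegralZl //.
  exact/integrable/coarse_bias_bounded_measurable.
- exact/integrable/bm_bias.
- exact/integrable/bounded_measurableD.
Qed.

End coarse_graining.

Hypothesis Hpnc : prep_noncontextual mu.

(* The measurement [N0] only serves to show that [A1] and [A2] have the same
   size. *)
Lemma noncontextual_sum_measure (N0 : meas Th) (T : finType) (P : T -> prep Th)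
    (A1 A2 : pred T) : (0 < #|A1|)%N ->
  (forall N k, \sum_(x in A1) prob (P x) N k = \sum_(x in A2) prob (P x) N k) ->
  forall B, measurable B ->
  (\sum_(x in A1) mu (P x) B = \sum_(x in A2) mu (P x) B)%E.
Proof.
move=> A1_gt0 opA12 B mB.
have card_sum (A : pred T) : #|A|%:R = \sum_(x in A) \sum_k prob (P x) N0 k :> R.
  by under eq_bigr do rewrite prob_sum1; rewrite sumr_const.
have cardA12 : #|A1| = #|A2|.
  apply/eqP; rewrite -(eqr_nat R) !card_sum exchange_big /=.
  by under eq_bigr do rewrite opA12; rewrite -exchange_big.
have A2_gt0 : (0 < #|A2|)%N by rewrite -cardA12.
have opeq N k : prob (uniform_mix P A1) N k = prob (uniform_mix P A2) N k.
  by rewrite !prob_uniform_mix // cardA12 opA12.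
have := Hpnc opeq mB; rewrite !measure_uniform_mix // cardA12.
move=> /(congr1 (fun z => ((#|A2|%:R : R)%:E * z)%E)).
rewrite !muleA -EFinM mulfV ?mul1e // pnatr_eq0 -lt0n //.
Qed.

End preparation_noncontextuality.

Theorem theorem1 (R : realType) (Th : opTheory R)
    (d : measure_display) (L : measurableType d)
    (mu : prep Th -> probability L R)
    (resp : forall M : meas Th, outcome M -> L -> R)
    (Hmodel : hv_model mu resp)
    (Hpnc : prep_noncontextual mu)
    (n : nat) (Hn : (1 <= n)%N)
    (P : {ffun 'I_n -> bool} -> prep Th)
    (M : 'I_n -> meas Th)
    (lab : forall y : 'I_n, outcome (M y) -> bool)
    (Hbin : forall y : 'I_n, bijective (lab y))
    (Hpo : forall s : {ffun 'I_n -> bool}, in_Par s ->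
       forall (N : meas Th) (k : outcome N),
         \sum_(x : {ffun 'I_n -> bool} | ~~ parity x s) prob (P x) N k
         = \sum_(x : {ffun 'I_n -> bool} | parity x s) prob (P x) N k) :
  (2 ^+ n * n%:R)^-1 *
    \sum_(y < n) \sum_(x : {ffun 'I_n -> bool}) succ_prob P lab x y
  <= (n%:R + 1) / (2 * n%:R).
Proof.
(* The bound holds for any way of coarse-graining Bob's outcomes into a bit. *)
have po : parity_oblivious (fun x => mu (P x)).
  move=> s sPar; apply: (noncontextual_sum_measure Hmodel Hpnc (M (Ordinal Hn))).
    by apply/card_gt0P; exists (zero_bits n); rewrite unfold_in parity_zero_bitsl.
  exact: (Hpo s sPar).
pose h y := coarse_bias resp (lab y).
have bias_le : \sum_(y < n) \sum_(x : {ffun 'I_n -> bool})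
    (-1) ^+ x y * \int[mu (P x)]_l h y l <= 2 ^+ n.
  apply: (@parity_oblivious_bias_le _ _ _ _ _ po h) => y.
    exact: (coarse_bias_bounded_measurable Hmodel (lab y)).1.
  exact (coarse_bias_le1 Hmodel (lab y)).
rewrite /succ_prob.
under eq_bigr do under eq_bigr do rewrite (sum_prob_coarseE Hmodel).
under eq_bigr do
  rewrite -mulr_sumr big_split /= sumr_const card_ffun card_bool card_ord.
rewrite -mulr_sumr big_split /= sumr_const card_ord natrX.
have n_gt0 : 0 < n%:R :> R by rewrite ltr0n.
have K_gt0 : 0 < 2 ^+ n :> R by rewrite exprn_gt0.
rewrite [X in _ <= X](_ : _ =
  (2 ^+ n * n%:R)^-1 * (2^-1 * (2 ^+ n *+ n + 2 ^+ n))).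
  by rewrite ler_pM2l ?ler_pM2l ?lerD2l ?invr_gt0 ?mulr_gt0.
by field; rewrite ?gt_eqF.
Qed.
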